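(* For all positive integers $k,t$, with $\mathcal{S}$ the support partition of $\mathbb{F}_q^k$, $$\frac{2^k q}{4^k(q-1)-a(q-a)}\sum_{s=1}^{\min(k,2t)}(2t+1-s)\binom{k}{s}\;\le\; r_{\mathcal{S}}(k,t)\;\le\; N_q(2^k,2t),$$ where $a=2^k\bmod q$.
   Context: $\mathcal{S}=\{S_A:A\subseteq[k]\}$ with $S_A=\{u\in\mathbb{F}_q^k:\mathrm{supp}(u)=A\}$, $\mathrm{supp}(u)=\{i:u_i\ne0\}$. A $(\mathcal{P},t)$-encoding with redundancy $r$ is a systematic map $\mathcal{C}:\mathbb{F}_q^k\to\mathbb{F}_q^{k+r}$, $\mathcal{C}(u)=(u,p(u))$, with Hamming distance $d(\mathcal{C}(u),\mathcal{C}(v))\ge 2t+1$ whenever $u,v$ lie in different blocks of $\mathcal{P}$; $r_{\mathcal{P}}(k,t)$ is the minimum such $r$. $N_q(M,d)$ denotes the minimum length of a $q$-ary code with $M$ codewords and minimum Hamming distance $d$. *)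

From Stdlib Require Import ClassicalEpsilon.
From mathcomp Require Import all_boot all_order all_algebra.
Set Implicit Arguments. Unset Strict Implicit. Unset Printing Implicit Defensive.
Import Order.TTheory GRing.Theory Num.Theory.

(* Least natural number satisfying P (chosen classically); meaningful when
   some n satisfies P (then it is the genuine minimum). *)
Definition minnat (P : nat -> Prop) : nat :=
  epsilon (inhabits 0%N) (fun n => P n /\ forall m, P m -> (n <= m)%N).

Section Codes.
Variable F : finFieldType.

Definition hamming (n : nat) (u v : 'rV[F]_n) : nat :=
  #|[pred i : 'I_n | u ord0 i != v ord0 i]|.

Definition supp (k : nat) (u : 'rV[F]_k) : {set 'I_k} :=
  [set i | u ord0 i != 0%R].

Definition sys_enc (k r : nat) (p : 'rV[F]_k -> 'rV[F]_r) (u : 'rV[F]_k)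
  : 'rV[F]_(k + r) := row_mx u (p u).

(* A (P,t)-encoding with redundancy r, the partition P of F^k being given by
   a block-labelling function [blk] (u, v in the same block iff blk u = blk v). *)
Definition is_encoding (L : eqType) (k t r : nat) (blk : 'rV[F]_k -> L)
  (p : 'rV[F]_k -> 'rV[F]_r) : Prop :=
  forall u v : 'rV[F]_k, blk u != blk v ->
    (2 * t + 1 <= hamming (sys_enc p u) (sys_enc p v))%N.

Definition r_P (L : eqType) (k t : nat) (blk : 'rV[F]_k -> L) : nat :=
  minnat (fun r => exists p : 'rV[F]_k -> 'rV[F]_r, is_encoding t blk p).

(* The support partition S = { S_A : A subset [k] }, S_A = {u : supp u = A}. *)
Definition r_S (k t : nat) : nat := r_P t (@supp k).

(* N_q(M,d): minimum length of a q-ary code (alphabet F, q = #|F|) with M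
   codewords and minimum Hamming distance d. *)
Definition N_q (M d : nat) : nat :=
  minnat (fun n => exists C : {set 'rV[F]_n}, #|C| = M /\
     forall x y, x \in C -> y \in C -> x != y -> (d <= hamming x y)%N).

End Codes.

From Stdlib Require Import ClassicalEpsilon Classical.
From mathcomp Require Import all_boot all_order all_algebra zify ring.
Import Order.TTheory GRing.Theory Num.Theory.

Set Implicit Arguments.
Unset Strict Implicit.
Unset Printing Implicit Defensive.

(* Upper bound: if C is a code with 2^k words and minimum distance 2t, send u
   to the codeword indexed by supp u; vectors with different supports differ
   in the systematic part and their redundancies are at distance >= 2t.
   Such a code exists (repeat the indicator vector of the support 2t times).

   Lower bound (Plotkin averaging): sum the distances between the redundancies
   of the indicator vectors u_A, u_B over all pairs of subsets A, B of [k].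
   Each pair whose symmetric difference has s elements contributes at least 2t+1-s, giving at least
   2^k sum_s C(k,s) (2t+1-s).  On the other hand each redundancy coordinate
   splits the 2^k vectors into q fibres, and the number of agreeing pairs is
   minimised by balanced fibres, which bounds each coordinate's contribution
   by (4^k (q-1) - a (q-a)) / q. *)

Lemma ex_least (P : nat -> Prop) n :
  P n -> exists2 x, P x & forall m, P m -> (x <= m)%N.
Proof.
elim/ltn_ind: n => n IH Pn.
have [[m Pm /IH]|no_smaller] := classic (exists2 m, P m & (m < n)%N); first exact.
exists n => // m Pm; rewrite leqNgt; apply/negP => ltmn.
by apply: no_smaller; exists m.
Qed.

Lemma minnat_spec (P : nat -> Prop) n :
  P n -> P (minnat P) /\ forall m, P m -> (minnat P <= m)%N.
Proof.
move=> /ex_least [x Px xmin].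
exact: (epsilon_spec (inhabits 0%N) (fun n => P n /\ forall m, P m -> (n <= m)%N)
  (ex_intro _ x (conj Px xmin))).
Qed.

(* n^2 is convex and the line (2m+1) n - m(m+1) meets it at n = m and m+1. *)
Lemma leq_sqr_secant m n : ((2 * m + 1) * n <= n * n + m * (m + 1))%N.
Proof. by case: (leqP n m) => le; nia. Qed.

(* The sum of squares of q naturals with sum M is least when they are as equal
   as possible: a of them equal to M %/ q + 1, the others to M %/ q. *)
Lemma balanced_sum_sqr (U : finType) (n : U -> nat) M : (0 < #|U|)%N ->
  (\sum_x n x = M)%N ->
  (M * M + (M %% #|U|) * (#|U| - M %% #|U|) <= #|U| * \sum_x n x * n x)%N.
Proof.
set q := #|U|; set X := (\sum_x n x * n x)%N => q_gt0 sum_n.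
have secant : ((2 * (M %/ q) + 1) * M <= X + q * ((M %/ q) * (M %/ q + 1)))%N.
  rewrite -{2}sum_n big_distrr /= -sum_nat_const -big_split /=.
  by apply: leq_sum => x _; apply: leq_sqr_secant.
have eM := divn_eq M q; have lt_aq := ltn_pmod M q_gt0.
move: secant eM lt_aq; set m := M %/ q; set a := M %% q => secant eM lt_aq.
have [b eq] : exists b, q = (a + b)%N by exists (q - a)%N; rewrite subnKC // ltnW.
rewrite eq addKn; rewrite eq in secant.
have expand : ((a + b) * ((2 * m + 1) * M)
              = M * M + a * b + (a + b) * ((a + b) * (m * (m + 1))))%N.
  by rewrite eM eq; ring.
rewrite -(leq_add2r ((a + b) * ((a + b) * (m * (m + 1))))) -expand -mulnDr.
by rewrite leq_mul2l secant orbT.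
Qed.

Section FibreCounting.
Variables (T U : finType) (c : T -> U).

Let fibre (x : U) : nat := #|[pred A | c A == x]|.

Let sum_fibre : (\sum_x fibre x = #|T|)%N.
Proof.
rewrite /fibre -sum1_card (partition_big c xpredT) //=.
by apply: eq_bigr => x _; rewrite sum1_card.
Qed.

Let sum_agree_fibre :
  (\sum_A \sum_B (c A == c B : nat) = \sum_x fibre x * fibre x)%N.
Proof.
have agree_row A : (\sum_B (c A == c B : nat) = fibre (c A))%N.
  rewrite /fibre -sum1_card [RHS]big_mkcond /=; apply: eq_bigr => B _.
  by rewrite inE eq_sym; case: eqP.
rewrite (eq_bigr _ (fun A _ => agree_row A)) (partition_big c xpredT) //=.
apply: eq_bigr => x _; rewrite (eq_bigr (fun=> fibre x)) => [|A /eqP <- //].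
by rewrite sum_nat_const.
Qed.

Lemma plotkin_column_bound : (0 < #|U|)%N ->
  (#|U| * \sum_A \sum_B (c A != c B : nat)
     + (#|T| * #|T| + (#|T| %% #|U|) * (#|U| - #|T| %% #|U|))
    <= #|U| * (#|T| * #|T|))%N.
Proof.
move=> q_gt0; set q := #|U|; set M := #|T|.
have all_pairs : (\sum_A \sum_B (c A != c B : nat) + \sum_A \sum_B (c A == c B : nat)
                  = M * M)%N.
  rewrite -big_split /= /M -sum_nat_const; apply: eq_bigr => A _.
  rewrite -big_split /= -sum1_card; apply: eq_bigr => B _.
  by case: (c A == c B).
have := balanced_sum_sqr q_gt0 sum_fibre; rewrite -sum_agree_fibre -/q -/M.
rewrite -{3}all_pairs mulnDr; lia.
Qed.

End FibreCounting.

Lemma card_set_ord n : #|{set 'I_n}| = (2 ^ n)%N.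
Proof. by rewrite -cardsT -powersetT card_powerset cardsT card_ord. Qed.

Lemma sum_set_by_card n (G : nat -> nat) :
  (\sum_(D : {set 'I_n}) G #|D| = \sum_(s < n.+1) 'C(n, s) * G s)%N.
Proof.
have card_lt (D : {set 'I_n}) : (#|D| < n.+1)%N.
  by have := subset_leq_card (subsetT D); rewrite cardsT card_ord.
rewrite (partition_big (fun D : {set 'I_n} => Ordinal (card_lt D)) xpredT) //=.
apply: eq_bigr => s _; rewrite (eq_bigr (fun=> G s)) => [|D /eqP <- //].
rewrite sum_nat_cond_const; have := card_draws 'I_n s; rewrite card_ord => <-.
by congr (_ * _)%N.
Qed.

Section SymmetricDifference.
Variable T : finType.

Definition symdiff (A B : {set T}) : {set T} := [set i | (i \in A) != (i \in B)].

Lemma symdiffK A : involutive (symdiff A).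
Proof. by move=> B; apply/setP => i; rewrite !inE; case: (i \in A); case: (i \in B). Qed.

Lemma symdiffxx A : symdiff A A = set0.
Proof. by apply/setP => i; rewrite !inE eqxx. Qed.

Lemma symdiff_eq0 A B : (symdiff A B == set0) = (A == B).
Proof.
apply/eqP/eqP => [AB0 | ->]; last exact: symdiffxx.
by apply/setP => i; move/setP/(_ i): AB0; rewrite !inE => /negbFE/eqP.
Qed.

Lemma sum_symdiff (G : {set T} -> nat) :
  (\sum_A \sum_B G (symdiff A B) = #|{set T}| * \sum_D G D)%N.
Proof.
rewrite -sum_nat_const; apply: eq_bigr => A _.
by rewrite [RHS](reindex_inj (inv_inj (symdiffK A))).
Qed.

End SymmetricDifference.

Section Hamming.
Variable F : finFieldType.

Lemma hamming_sum n (u v : 'rV[F]_n) :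
  hamming u v = (\sum_i (u ord0 i != v ord0 i : nat))%N.
Proof.
rewrite /hamming -sum1_card big_mkcond /=; apply: eq_bigr => i _.
by rewrite inE; case: (_ != _).
Qed.

Lemma hammingxx n (u : 'rV[F]_n) : hamming u u = 0%N.
Proof. by rewrite hamming_sum big1 // => i _; rewrite eqxx. Qed.

Lemma hamming_gt0 n (u v : 'rV[F]_n) : u != v -> (0 < hamming u v)%N.
Proof.
move=> neq_uv; apply/card_gt0P.
have [i /= neq_i | all_eq] := pickP [pred i | u ord0 i != v ord0 i]; first by exists i.
by case/eqP: neq_uv; apply/rowP => i; apply/eqP/negbFE; exact: all_eq.
Qed.

Lemma hamming_row_mx m n (u1 u2 : 'rV[F]_m) (v1 v2 : 'rV[F]_n) :
  hamming (row_mx u1 v1) (row_mx u2 v2) = (hamming u1 u2 + hamming v1 v2)%N.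
Proof.
by rewrite !hamming_sum big_split_ord; congr (_ + _)%N; apply: eq_bigr => i _;
  rewrite ?row_mxEl ?row_mxEr.
Qed.

Fixpoint repeat_row k (j : nat) (v : 'rV[F]_k) : 'rV[F]_(j * k) :=
  if j is j'.+1 then row_mx v (repeat_row j' v) else 0.

Lemma hamming_repeat_row k j (u v : 'rV[F]_k) :
  hamming (repeat_row j u) (repeat_row j v) = (j * hamming u v)%N.
Proof. by elim: j => [|j IHj] /=; rewrite ?hammingxx // hamming_row_mx IHj mulSn. Qed.

Definition indicator k (A : {set 'I_k}) : 'rV[F]_k := \row_i (if i \in A then 1 else 0)%R.

Lemma supp_indicator k (A : {set 'I_k}) : supp (indicator A) = A.
Proof. by apply/setP => i; rewrite inE mxE; case: (i \in A); rewrite ?oner_eq0 ?eqxx. Qed.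

Lemma hamming_indicator k (A B : {set 'I_k}) :
  hamming (indicator A) (indicator B) = #|symdiff A B|.
Proof.
apply: eq_card => i; rewrite !inE !mxE.
by case: (i \in A); case: (i \in B); rewrite ?eqxx //= ?oner_neq0 // eq_sym oner_neq0.
Qed.

End Hamming.

Section SupportEncoding.
Variables (F : finFieldType) (k t : nat).

Definition has_code (M d n : nat) : Prop :=
  exists C : {set 'rV[F]_n}, #|C| = M /\
    forall x y, x \in C -> y \in C -> x != y -> (d <= hamming x y)%N.

Definition has_support_encoding (r : nat) : Prop :=
  exists p : 'rV[F]_k -> 'rV[F]_r, is_encoding t (@supp F k) p.

Lemma has_code_repetition : (0 < t)%N -> has_code (2 ^ k) (2 * t) (2 * t * k).
Proof.
move=> t_gt0; pose rep (A : {set 'I_k}) := repeat_row (2 * t) (indicator F A).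
have rep_dist A B : A != B -> (2 * t <= hamming (rep A) (rep B))%N.
  rewrite -symdiff_eq0 -card_gt0 => AB_gt0.
  by rewrite hamming_repeat_row hamming_indicator -{1}[(2 * t)%N]muln1 leq_mul2l AB_gt0 orbT.
have rep_inj : injective rep.
  move=> A B eq_rep; apply: contraTeq isT => /rep_dist.
  by rewrite eq_rep hammingxx leqn0 muln_eq0 /= eqn0Ngt t_gt0.
exists [set rep A | A : {set 'I_k}]; split; first by rewrite card_imset // card_set_ord.
move=> _ _ /imsetP[A _ ->] /imsetP[B _ ->] neq_rep; apply: rep_dist.
by apply: contraNneq neq_rep => ->.
Qed.

Lemma support_encoding_of_code n :
  has_code (2 ^ k) (2 * t) n -> has_support_encoding n.
Proof.
move=> [C [card_C dist_C]].
have card_eq : #|{set 'I_k}| = #|C| by rewrite card_C card_set_ord.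
pose g (A : {set 'I_k}) : 'rV[F]_n := enum_val (cast_ord card_eq (enum_rank A)).
have g_inj : injective g.
  by move=> A B /enum_val_inj /cast_ord_inj /enum_rank_inj.
exists (fun u => g (supp u)) => u v neq_supp.
have neq_uv : u != v by apply: contraNneq neq_supp => ->.
rewrite /sys_enc hamming_row_mx addnC leq_add ?hamming_gt0 //.
by apply: dist_C; rewrite ?enum_valP // (inj_eq g_inj).
Qed.

Lemma has_support_encoding_r_S : (0 < t)%N -> has_support_encoding (r_S F k t).
Proof.
move=> /has_code_repetition /(@minnat_spec (has_code _ _)) [/support_encoding_of_code enc _].
exact: (minnat_spec enc).1.
Qed.

Lemma r_S_le_N_q : (0 < t)%N -> (r_S F k t <= N_q F (2 ^ k) (2 * t))%N.
Proof.
move=> /has_code_repetition /(@minnat_spec (has_code _ _)) [/support_encoding_of_code enc _].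
exact: (minnat_spec enc).2.
Qed.

End SupportEncoding.

Lemma plotkin_sum_hamming (F : finFieldType) (T : finType) r (f : T -> 'rV[F]_r) :
  (#|F| * \sum_A \sum_B hamming (f A) (f B)
    <= r * (#|T| * #|T| * (#|F| - 1) - (#|T| %% #|F|) * (#|F| - #|T| %% #|F|)))%N.
Proof.
set q := #|F|; set M := #|T|; set a := (M %% q)%N.
have q_gt0 : (0 < q)%N by apply/card_gt0P; exists 0%R.
have by_column : (\sum_A \sum_B hamming (f A) (f B)
                  = \sum_(j < r) \sum_A \sum_B (f A ord0 j != f B ord0 j : nat))%N.
  rewrite [RHS]exchange_big; apply: eq_bigr => A _.
  by rewrite [RHS]exchange_big; apply: eq_bigr => B _; rewrite hamming_sum.
rewrite by_column big_distrr /= -[r in (_ <= r * _)%N]card_ord -sum_nat_const.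
apply: leq_sum => j _; have := plotkin_column_bound (fun A => f A ord0 j) q_gt0.
rewrite -/q -/M -/a [(M * M * _)%N]mulnBr muln1 [(M * M * q)%N]mulnC.
move: (\sum_A _)%N (M * M)%N (a * (q - a))%N => X M2 Y.
move: (q * X)%N (q * M2)%N => qX qM2; lia.
Qed.

Section LowerBound.
Variables (F : finFieldType) (k t : nat).
Local Notation q := #|F|.
Local Notation a := (2 ^ k %% q)%N.

(* What remains of the distance 2t+1 after the s systematic positions in which
   two indicator vectors with supports at symmetric difference s differ. *)
Definition forced_dist (s : nat) : nat := if s == 0%N then 0%N else (2 * t + 1 - s)%N.

Lemma forced_dist_indicator r (p : 'rV[F]_k -> 'rV[F]_r) A B :
  is_encoding t (@supp F k) p ->
  (forced_dist #|symdiff A B| <= hamming (p (indicator F A)) (p (indicator F B)))%N.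
Proof.
move=> enc; rewrite /forced_dist cards_eq0 symdiff_eq0.
have [// | neqAB] := eqVneq A B.
have := enc (indicator F A) (indicator F B).
rewrite !supp_indicator neqAB /sys_enc hamming_row_mx hamming_indicator => /(_ isT).
lia.
Qed.

Lemma sum_forced_dist :
  (\sum_(1 <= s < (minn k (2 * t)).+1) ((2 * t + 1 - s) * 'C(k, s))
    <= \sum_(D : {set 'I_k}) forced_dist #|D|)%N.
Proof.
set m := minn k (2 * t).
have -> : (\sum_(1 <= s < m.+1) ((2 * t + 1 - s) * 'C(k, s))
           = \sum_(1 <= s < m.+1) 'C(k, s) * forced_dist s)%N.
  by apply: eq_big_nat => s /andP[s_gt0 _]; rewrite /forced_dist eqn0Ngt s_gt0 mulnC.
rewrite sum_set_by_card -(big_mkord xpredT (fun s => 'C(k, s) * forced_dist s)%N).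
rewrite [X in (_ <= X)%N]big_ltn // [X in (_ <= _ + X)%N](big_cat_nat (n := m.+1)) //=.
by rewrite addnCA leq_addr.
by rewrite ltnS geq_minl.
Qed.

Lemma encoding_redundancy_lb r (p : 'rV[F]_k -> 'rV[F]_r) :
  is_encoding t (@supp F k) p ->
  (q * (2 ^ k * \sum_(1 <= s < (minn k (2 * t)).+1) ((2 * t + 1 - s) * 'C(k, s)))
    <= r * (4 ^ k * (q - 1) - a * (q - a)))%N.
Proof.
move=> enc; have := plotkin_sum_hamming (fun A => p (indicator F A)).
rewrite card_set_ord (_ : 2 ^ k * 2 ^ k = 4 ^ k)%N; last by rewrite -expnMn.
move=> le_H; apply: leq_trans le_H; rewrite leq_mul2l; apply/orP; right.
apply: (@leq_trans (\sum_(A : {set 'I_k}) \sum_B forced_dist #|symdiff A B|)).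
  by rewrite (sum_symdiff (fun D => forced_dist #|D|)) card_set_ord leq_mul2l sum_forced_dist orbT.
by apply: leq_sum => A _; apply: leq_sum => B _; apply: forced_dist_indicator.
Qed.

End LowerBound.

Lemma leq_modn_compl M q : ((M %% q) * (q - M %% q) <= M * (q - 1))%N.
Proof.
have [-> | a_gt0] := posnP (M %% q); first by rewrite mul0n.
by rewrite leq_mul ?leq_mod // leq_sub2l.
Qed.

Lemma ler_ratio_nat (R : realFieldType) (n d s r : nat) :
  (n * s <= r * d)%N -> (n%:R / d%:R * s%:R <= r%:R :> R)%R.
Proof.
have [-> _ | d_gt0 le_nsrd] := posnP d; first by rewrite invr0 mulr0 mul0r ler0n.
by rewrite mulrAC ler_pdivrMr ?ltr0n // -!natrM ler_nat.
Qed.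

Theorem corollary7 (F : finFieldType) (k t : nat) (hk : (0 < k)%N) (ht : (0 < t)%N) :
  let q := #|F| in
  let a := (2 ^ k %% q)%N in
  ((((2 ^ k * q)%N)%:R / (((4 ^ k * (q - 1))%N)%:R - ((a * (q - a))%N)%:R)) *
     (\sum_(1 <= s < (minn k (2 * t)).+1) ((2 * t + 1 - s) * 'C(k, s))%N)%:R
   <= (r_S F k t)%:R :> rat)%R
  /\ (r_S F k t <= N_q F (2 ^ k) (2 * t))%N.
Proof.
move=> q a; split; last exact: r_S_le_N_q.
have [p enc] := has_support_encoding_r_S F k ht.
have le_a : (a * (q - a) <= 4 ^ k * (q - 1))%N.
  by apply: leq_trans (leq_modn_compl _ _) _; rewrite leq_mul2r leq_exp2r ?orbT.
rewrite -natrB //; apply: ler_ratio_nat.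
by rewrite mulnAC mulnC; apply: encoding_redundancy_lb enc.
Qed.
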